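(* Let $X$ be a real vector space, let $D \subseteq X$ be a convex set, and let $f: D \to \mathbf{R}\cup\{+\infty\}$ be radially lower semicontinuous. Then $f$ is convex, i.e. $f(\lambda x+(1-\lambda)y) \le \lambda f(x)+(1-\lambda)f(y)$ for all $x,y \in D$ and all $\lambda \in [0,1]$, if and only if for all $x,y \in D$ there exists $\lambda=\lambda(x,y) \in (0,1)$ such that $f(\lambda x+(1-\lambda)y) \le \lambda f(x)+(1-\lambda)f(y)$.
   Context: A function $f: D \to \mathbf{R}\cup\{+\infty\}$ on a convex subset $D$ of a real vector space is called radially lower semicontinuous if $f(x) \le \liminf_{t \downarrow 0} f(x+t(y-x))$ for all $x,y \in D$. Arithmetic in $\mathbf{R}\cup\{+\infty\}$ follows the usual conventions ($a+(+\infty)=+\infty$ for $a\in\mathbf{R}\cup\{+\infty\}$, $c\cdot(+\infty)=+\infty$ for $c>0$, and $0\cdot(+\infty)=0$). *)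

From HB Require Import structures.
From mathcomp Require Import all_boot all_order all_algebra.
From mathcomp Require Import all_classical all_reals all_analysis.
Set Implicit Arguments. Unset Strict Implicit. Unset Printing Implicit Defensive.
Import Order.TTheory GRing.Theory Num.Theory.
Import numFieldNormedType.Exports.
Local Open Scope classical_set_scope.
Local Open Scope ring_scope.
Local Open Scope ereal_scope.

Definition convex_subset (R : realType) (X : lmodType R) (D : set X) : Prop :=
  forall (x y : X) (l : R), D x -> D y -> (0 <= l <= 1)%R ->
    D (l *: x + (1 - l) *: y)%R.

Definition radially_lsc (R : realType) (X : lmodType R) (D : set X)
    (f : X -> \bar R) : Prop :=
  forall x y : X, D x -> D y ->
    f x <= limf_einf (fun t : R => f (x + t *: (y - x))%R) (at_right (0:R)).

(* Restricting f to the segment t |-> x + t (y - x) reduces the theorem to a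
   function g on [0, 1] that is radially lower semicontinuous and
   lambda-convex; it suffices to show that g lies below its chord.  The set
   of points where g lies strictly above the chord is relatively open in [0, 1]
   (g is lower semicontinuous from both sides, the chord is continuous) and
   contains neither 0 nor 1.  If it contained some t, let a < t < b be the
   endpoints of the largest interval around t inside it: a and b are outside
   the set, so lambda-convexity at a and b gives a point between them at
   which g is below the chord, a contradiction.  When f x or f y is +oo the
   convexity inequality is trivial. *)

From HB Require Import structures.
From mathcomp Require Import all_boot all_order all_algebra.
From mathcomp Require Import all_classical all_reals all_analysis.
From mathcomp Require Import ring lra.
Import Order.TTheory GRing.Theory Num.Theory.
Import numFieldNormedType.Exports.
Set Implicit Arguments. Unset Strict Implicit. Unset Printing Implicit Defensive.
Local Open Scope classical_set_scope.
Local Open Scope ring_scope.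

Definition convex_on (R : realType) (X : lmodType R) (D : set X)
    (f : X -> \bar R) : Prop :=
  forall (x y : X) (l : R), D x -> D y -> (0 <= l <= 1)%R ->
    (f (l *: x + (1 - l) *: y)%R <= l%:E * f x + (1 - l)%:E * f y)%E.

Definition lambda_convex_on (R : realType) (X : lmodType R) (D : set X)
    (f : X -> \bar R) : Prop :=
  forall x y : X, D x -> D y -> exists l : R, (0 < l < 1)%R /\
    (f (l *: x + (1 - l) *: y)%R <= l%:E * f x + (1 - l)%:E * f y)%E.

Lemma EFin_lt_dense (R : realType) (x : R) (y : \bar R) :
  (x%:E < y)%E -> exists2 r : R, x < r & (r%:E < y)%E.
Proof.
case: y => [y | _ | //]; last by exists (x + 1); rewrite ?ltey // ltrDl.
by rewrite lte_fin => xy; exists ((x + y) / 2); rewrite ?lte_fin; lra.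
Qed.

Lemma radially_lsc_near (R : realType) (X : lmodType R) (D : set X)
    (f : X -> \bar R) x y e :
  radially_lsc D f -> D x -> D y -> (e%:E < f x)%E ->
  \forall t \near 0^'+, (e%:E < f (x + t *: (y - x))%R)%E.
Proof.
move=> f_lsc Dx Dy /lt_le_trans/(_ (f_lsc _ _ Dx Dy)).
rewrite limf_einfE => /ereal_sup_gt[_ [V FV <-]] eV.
apply: filterS FV => t Vt; apply: (lt_le_trans eV).
by apply: ereal_inf_lbound; exists t.
Qed.

Section near_right_left.
Variable R : realType.
Implicit Types (P : set R) (t u c : R).

Lemma near_at_right0_div c P : 0 < c ->
  (\forall s \near 0^'+, P s) -> \forall s \near 0^'+, P (s / c).
Proof.
move=> c0; rewrite !near_withinE => /(near0Z (c^-1 : R^o)).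
by apply: filterS => s Ps s0; apply: Ps; rewrite divr_gt0.
Qed.

Lemma near_at_right_line P t u : t < u ->
  (\forall s \near 0^'+, P (t + s * (u - t))) -> \forall r \near t^'+, P r.
Proof.
rewrite -subr_gt0 => ut_gt0 /(near_at_right0_div ut_gt0) H.
by apply/nbhs_right0P; apply: filterS H => s; rewrite divfK ?gt_eqF.
Qed.

Lemma near_at_left_line P t u : u < t ->
  (\forall s \near 0^'+, P (t + s * (u - t))) -> \forall r \near t^'-, P r.
Proof.
rewrite -subr_gt0 => tu_gt0 /(near_at_right0_div tu_gt0) H.
apply/nbhs_left0P; apply: filterS H => s.
by rewrite -[u - t]opprB mulrN divfK ?gt_eqF.
Qed.

End near_right_left.

Section boundary.
Variable R : realType.
Implicit Types (P : pred R) (u v : R).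

Lemma left_boundary P u t0 : u <= t0 -> ~~ P u -> P t0 ->
  (forall t, u < t <= t0 -> P t -> \forall s \near t^'-, P s) ->
  exists a, [/\ u <= a < t0, ~~ P a & forall s, a < s <= t0 -> P s].
Proof.
move=> ut0 nPu Pt0 P_left.
pose A := [set s | u <= s <= t0 /\ ~~ P s].
have Au : A u by rewrite /A /= lexx ut0.
have supA : has_sup A by split; [exists u | exists t0 => s [/andP[_ ->]]].
have le_supA := sup_upper_bound supA.
have ua : u <= sup A by exact: le_supA.
have at0 : sup A <= t0 by apply: ge_sup; [exists u | move=> s [/andP[_ ->]]].
have nPa : ~~ P (sup A).
  apply/negP => Pa; have ua' : u < sup A.
    by rewrite lt_neqAle ua andbT; apply: contraNneq nPu => ->.
  have := P_left _ _ Pa; rewrite ua' at0 => /(_ isT).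
  apply/not_near_at_leftP => e.
  have [s [/andP[us st0] nPs] es] := sup_adherent (gt0 e) supA.
  have As : A s by split => //; rewrite us st0.
  exists s; last exact/negP.
  rewrite es lt_neqAle le_supA // andbT.
  by apply: contraNneq nPs => ->.
exists (sup A); split => //.
  by rewrite ua lt_neqAle at0 andbT; apply: contraNneq nPa => ->.
move=> s /andP[a_lt_s st0]; apply/negPn/negP => nPs.
have : s <= sup A by apply: le_supA; rewrite /A /= st0 (le_trans ua (ltW a_lt_s)).
by rewrite leNgt a_lt_s.
Qed.

Lemma right_boundary P t0 v : t0 <= v -> ~~ P v -> P t0 ->
  (forall t, t0 <= t < v -> P t -> \forall s \near t^'+, P s) ->
  exists b, [/\ t0 < b <= v, ~~ P b & forall s, t0 <= s < b -> P s].
Proof.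
move=> t0v nPv Pt0 P_right.
have [] := @left_boundary (fun s => P (- s)) (- v) (- t0).
- by rewrite lerN2.
- by rewrite opprK.
- by rewrite opprK.
- move=> t; rewrite ltrNl lerNr => /andP[tv t0t] Pt.
  apply/(nbhs_right_leftP t (fun s => P (- s))).
  have := P_right _ _ Pt; rewrite t0t tv => /(_ isT).
  by apply: filterS => s; rewrite /= opprK.
- move=> a []; rewrite lerNl ltrNr => /andP[va at0] nPa Pa.
  exists (- a); split => //; first by rewrite at0 va.
  move=> s /andP[t0s sa]; rewrite -[s]opprK; apply: Pa.
  by rewrite ltrNr lerN2 sa t0s.
Qed.

End boundary.

Section chord.
Variables (R : realType) (g : R -> \bar R) (r1 r2 : R).
Let I := [set t : R | 0 <= t <= 1].
Hypotheses (g_lsc : radially_lsc I g) (g_lconv : lambda_convex_on I g).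
Hypotheses (g0 : (g 0 <= r1%:E)%E) (g1 : (g 1 <= r2%:E)%E).

Let chord t := r1 + t * (r2 - r1).
Let above t := ((chord t)%:E < g t)%E.

Let chord_continuous : continuous chord.
Proof.
move=> t; apply: cvgD; first exact: cvg_cst.
by apply: cvgM; [exact: cvg_id | exact: cvg_cst].
Qed.

Let above_left t : 0 < t <= 1 -> above t -> \forall s \near t^'-, above s.
Proof.
move=> /andP[t_gt0 t1] /EFin_lt_dense[e chord_e e_g].
near=> s; apply: (@lt_trans _ _ e%:E).
  rewrite lte_fin; near: s.
  exact: cvgr_lt (cvg_at_left_filter (@chord_continuous t)) _ chord_e.
near: s; apply: (near_at_left_line t_gt0).
apply: (radially_lsc_near g_lsc _ _ e_g).
  by rewrite /I /= t1 ltW.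
by rewrite /I /= lexx ler01.
Unshelve. all: by end_near. Qed.

Let above_right t : 0 <= t < 1 -> above t -> \forall s \near t^'+, above s.
Proof.
move=> /andP[t0 t_lt1] /EFin_lt_dense[e chord_e e_g].
near=> s; apply: (@lt_trans _ _ e%:E).
  rewrite lte_fin; near: s.
  exact: cvgr_lt (cvg_at_right_filter (@chord_continuous t)) _ chord_e.
near: s; apply: (near_at_right_line t_lt1).
apply: (radially_lsc_near g_lsc _ _ e_g).
  by rewrite /I /= t0 ltW.
by rewrite /I /= ler01 lexx.
Unshelve. all: by end_near. Qed.

Lemma le_chord t : 0 <= t <= 1 -> (g t <= (chord t)%:E)%E.
Proof.
move=> /andP[t0 t1]; rewrite leNgt; apply/negP => above_t.
have not_above0 : ~~ above 0 by rewrite /above /chord mul0r addr0 -leNgt.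
have not_above1 : ~~ above 1 by rewrite /above /chord mul1r addrC subrK -leNgt.
have [a [/andP[a0 a_lt_t] not_above_a above_at]] : exists a,
    [/\ 0 <= a < t, ~~ above a & forall s, a < s <= t -> above s].
  apply: left_boundary t0 not_above0 above_t _ => s /andP[s0 st].
  by apply: above_left; rewrite s0 (le_trans st t1).
have [b [/andP[t_lt_b b1] not_above_b above_tb]] : exists b,
    [/\ t < b <= 1, ~~ above b & forall s, t <= s < b -> above s].
  apply: right_boundary t1 not_above1 above_t _ => s /andP[ts s1].
  by apply: above_right; rewrite s1 (le_trans t0 ts).
have Ia : I a by rewrite /I /= a0 (le_trans (ltW a_lt_t) t1).
have Ib : I b by rewrite /I /= b1 (le_trans t0 (ltW t_lt_b)).
have [l [/andP[l0 l1] g_c]] := g_lconv Ia Ib.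
set c := l *: a + (1 - l) *: b in g_c.
have above_c : above c.
  have [ct|tc] := lerP c t.
    by apply: above_at; rewrite ct andbT /c /GRing.scale /=; nra.
  by apply: above_tb; rewrite (ltW tc) /c /GRing.scale /=; nra.
move: above_c; apply/negP; rewrite -leNgt (le_trans g_c) //.
have -> : (chord c)%:E = (l%:E * (chord a)%:E + (1 - l)%:E * (chord b)%:E)%E.
  by rewrite -!EFinM -EFinD /chord /c /GRing.scale /=; congr EFin; ring.
apply: leeD; apply: lee_wpmul2l;
  rewrite ?lee_fin ?subr_ge0 ?(ltW l0) ?(ltW l1) //.
  by rewrite leNgt.
by rewrite leNgt.
Qed.

End chord.

Section line.
Variables (R : realType) (X : lmodType R).
Implicit Types (x y d : X) (l s t u a b : R).

Lemma line_pointE x y t : x + t *: (y - x) = (1 - t) *: x + t *: y.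
Proof. by rewrite scalerBr scalerBl scale1r addrA addrAC. Qed.

Lemma line_shift x d t u s :
  (x + t *: d) + s *: ((x + u *: d) - (x + t *: d)) = x + (t + s * (u - t)) *: d.
Proof.
by rewrite opprD addrACA subrr add0r -scalerBl scalerA -addrA -scalerDl.
Qed.

Lemma line_convex_combination x d l a b :
  l *: (x + a *: d) + (1 - l) *: (x + b *: d) = x + (l * a + (1 - l) * b) *: d.
Proof.
rewrite !scalerDr !scalerA addrACA -!scalerDl.
by rewrite (_ : l + (1 - l) = 1) ?scale1r //; ring.
Qed.

Lemma convex_subset_line (D : set X) x y t : convex_subset D ->
  D x -> D y -> 0 <= t <= 1 -> D (x + t *: (y - x)).
Proof.
move=> D_convex Dx Dy t01; rewrite line_pointE.
by have := D_convex x y (1 - t) Dx Dy; rewrite subKr; apply; lra.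
Qed.

Variables (D : set X) (f : X -> \bar R) (x y : X).
Hypotheses (D_convex : convex_subset D) (Dx : D x) (Dy : D y).
Let I := [set t : R | 0 <= t <= 1].
Let D_line t : I t -> D (x + t *: (y - x)) := convex_subset_line D_convex Dx Dy.

Lemma radially_lsc_line : radially_lsc D f ->
  radially_lsc I (fun t => f (x + t *: (y - x))).
Proof.
move=> f_lsc t u It Iu; have := f_lsc _ _ (D_line It) (D_line Iu).
by congr (_ <= limf_einf _ _)%E; apply: funext => s; rewrite line_shift.
Qed.

Lemma lambda_convex_line : lambda_convex_on D f ->
  lambda_convex_on I (fun t => f (x + t *: (y - x))).
Proof.
move=> f_lconv a b Ia Ib.
have [l [l01 f_ab]] := f_lconv _ _ (D_line Ia) (D_line Ib).
by exists l; split => //; rewrite line_convex_combination in f_ab.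
Qed.

End line.

Local Open Scope ereal_scope.

Lemma convex_on_lambda_convex (R : realType) (X : lmodType R) (D : set X)
    (f : X -> \bar R) :
  convex_on D f -> lambda_convex_on D f.
Proof.
move=> f_convex x y Dx Dy; exists (2^-1)%R.
by split; [|apply: f_convex => //]; apply/andP; split; lra.
Qed.

Lemma lambda_convex_on_convex (R : realType) (X : lmodType R) (D : set X)
    (f : X -> \bar R) :
  convex_subset D -> (forall x, D x -> f x != -oo) -> radially_lsc D f ->
  lambda_convex_on D f -> convex_on D f.
Proof.
move=> D_convex f_gtNy f_lsc f_lconv x y l Dx Dy /andP[l0 l1].
have [->|l_neq1] := eqVneq l 1%R.
  by rewrite subrr scale0r scale1r addr0 mul1e mul0e adde0.
have [->|l_neq0] := eqVneq l 0%R.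
  by rewrite subr0 scale0r scale1r add0r mul0e mul1e add0e.
have l_gt0 : (0 < l)%R by rewrite lt_neqAle eq_sym l_neq0.
have l_lt1 : (0 < 1 - l)%R by rewrite subr_gt0 lt_neqAle l_neq1.
case fx : (f x) (f_gtNy x Dx) => [r1| |] // _;
  case fy : (f y) (f_gtNy y Dy) => [r2| |] // _; last 3 first.
- by rewrite gt0_muley ?lte_fin // addey ?leey.
- by rewrite gt0_muley ?lte_fin // addye ?leey.
- by rewrite !gt0_muley ?lte_fin // addye ?leey.
have g0 : f (x + 0 *: (y - x))%R <= r1%:E by rewrite scale0r addr0 fx.
have g1 : f (x + 1 *: (y - x))%R <= r2%:E by rewrite scale1r addrC subrK fy.
have t01 : (0 <= 1 - l <= 1)%R by apply/andP; split; lra.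
have := le_chord (radially_lsc_line D_convex Dx Dy f_lsc)
  (lambda_convex_line D_convex Dx Dy f_lconv) g0 g1 t01.
rewrite line_pointE subKr => /le_trans; apply.
by rewrite -!EFinM -EFinD lee_fin; nra.
Qed.

Theorem theorem1 (R : realType) (X : lmodType R) (D : set X) (f : X -> \bar R)
  (hD : convex_subset D) (hf : forall x, D x -> f x != -oo)
  (hrl : radially_lsc D f) :
  (forall (x y : X) (l : R), D x -> D y -> (0 <= l <= 1)%R ->
     f (l *: x + (1 - l) *: y)%R <= l%:E * f x + (1 - l)%:E * f y)
  <->
  (forall x y : X, D x -> D y -> exists l : R, (0 < l < 1)%R /\
     f (l *: x + (1 - l) *: y)%R <= l%:E * f x + (1 - l)%:E * f y).
Proof.
split; first exact: convex_on_lambda_convex.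
exact: lambda_convex_on_convex.
Qed.
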